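(* Let $m,a\in\mathbb N$ and let $\mathfrak o$ be a compact discrete valuation ring. Let $V^*_{m,a}(\mathfrak o)$ be the $\mathfrak o$-representation of the dual star quiver $\mathsf S^*_a$ in which every vertex is represented by $\mathfrak o^m$ and every arrow by the identity map. Then $$\zeta_{V^*_{m,a}(\mathfrak o)}(s)=\zeta_{\mathfrak o^m}(as)\,\zeta_{\mathfrak o^m}(s)^{a-1}.$$
   Context: The dual star quiver $\mathsf S^*_a$ has vertices $v_1,\dots,v_a$ and arrows $v_j\to v_1$ for $j=2,\dots,a$. Subrepresentations of a representation $(\mathcal L_\iota,f_\phi)$ are tuples of submodules $\Lambda_\iota\le\mathcal L_\iota$ with $f_\phi(\Lambda_{\mathrm{tail}(\phi)})\subseteq\Lambda_{\mathrm{head}(\phi)}$, and $\zeta_V(s)=\sum_{V'}\prod_\iota|\mathcal L_\iota:\Lambda_\iota|^{-s}$ over finite-index subrepresentations. $\zeta_{\mathfrak o^m}(s)=\sum_{U}|\mathfrak o^m:U|^{-s}$ sums over all $\mathfrak o$-submodules $U$ of finite index in $\mathfrak o^m$. *)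

From HB Require Import structures.
From mathcomp Require Import all_boot all_order all_algebra.
From mathcomp Require Import boolp classical_sets reals constructive_ereal ereal esum exp.
Set Implicit Arguments. Unset Strict Implicit. Unset Printing Implicit Defensive.
Import Order.TTheory GRing.Theory Num.Theory.
Local Open Scope ring_scope.
Local Open Scope classical_set_scope.

Definition dvdr {R : comRingType} (x y : R) : Prop := exists c, y = c * x.

(* pi is a uniformizer: R is a DVR with maximal ideal (pi) *)
Definition is_uniformizer (R : idomainType) (pi : R) : Prop :=
  [/\ pi != 0, pi \isn't a GRing.unit &
      forall x : R, x != 0 -> exists (u : R) (n : nat),
        u \is a GRing.unit /\ x = u * pi ^+ n].

Definition adic_open (R : idomainType) (pi : R) (U : set R) : Prop :=
  forall x, U x -> exists n : nat, forall y, dvdr (pi ^+ n) (y - x) -> U y.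

Definition adic_compact (R : idomainType) (pi : R) : Prop :=
  forall (I : Type) (U : I -> set R),
    (forall i, adic_open pi (U i)) -> (forall x, exists i, U i x) ->
    exists (n : nat) (f : 'I_n -> I), forall x, exists j, U (f j) x.

Definition compact_DVR (R : idomainType) : Prop :=
  exists pi : R, is_uniformizer pi /\ adic_compact pi.

Definition submodule (R : comRingType) (n : nat) (U : set 'rV[R]_n) : Prop :=
  [/\ U 0, (forall u v, U u -> U v -> U (u + v)) &
      (forall (c : R) u, U u -> U (c *: u))].

(* |R^n : U| = k : there are exactly k cosets of U *)
Definition has_index (R : comRingType) (n : nat) (U : set 'rV[R]_n) (k : nat) : Prop :=
  exists f : 'I_k -> 'rV[R]_n,
    (forall i j, U (f i - f j) -> i = j) /\ (forall v, exists i, U (v - f i)).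

Definition finite_index (R : comRingType) (n : nat) (U : set 'rV[R]_n) : Prop :=
  exists k, has_index U k.

(* the index |R^n : U| (meaningful when finite_index U) *)
Definition lindex (R : comRingType) (n : nat) (U : set 'rV[R]_n) : nat :=
  xget 0%N [set k | has_index U k].

Definition zeta_free (Rr : realType) (o : comRingType) (m : nat) (s : Rr) : \bar Rr :=
  \esum_(U in [set U : {classic set 'rV[o]_m} | submodule U /\ finite_index U])
     (((lindex U)%:R : Rr) `^ (- s))%:E.

Record quiver := Quiver {
  qv : nat;
  qa : nat;
  qtail : 'I_qa -> 'I_qv;
  qhead : 'I_qa -> 'I_qv }.

(* representation by free modules R^(qdim i), arrows acting on row vectors *)
Record qrep (R : comRingType) (Q : quiver) := QRep {
  qdim : 'I_(qv Q) -> nat;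
  qmap : forall e : 'I_(qa Q), 'M[R]_(qdim (qtail e), qdim (qhead e)) }.

Definition subrep (R : comRingType) (Q : quiver) (V : qrep R Q)
    (L : forall i : 'I_(qv Q), set 'rV[R]_(qdim V i)) : Prop :=
  (forall i, submodule (L i)) /\
  (forall (e : 'I_(qa Q)) v, L (qtail e) v -> L (qhead e) (v *m qmap V e)).

Definition zeta_rep (Rr : realType) (R : comRingType) (Q : quiver) (V : qrep R Q)
    (s : Rr) : \bar Rr :=
  \esum_(L in [set L : {classic forall i : 'I_(qv Q), set 'rV[R]_(qdim V i)} |
                  subrep L /\ forall i, finite_index (L i)])
     (\prod_(i < qv Q) (((lindex (L i))%:R : Rr) `^ (- s)))%:E.

(* vertex v_j is the ordinal j-1; arrow e : 'I_(a-1) goes v_(e+2) -> v_1 *)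

Lemma dstar_tail_proof (a : nat) (e : 'I_a.-1) : (e.+1 < a)%N.
Proof. by case: a e => [[]|a] e //=; rewrite ltnS. Qed.

Lemma dstar_head_proof (a : nat) (e : 'I_a.-1) : (0 < a)%N.
Proof. by case: a e => [[]|a]. Qed.

Definition dual_star (a : nat) : quiver :=
  @Quiver a a.-1 (fun e => Ordinal (dstar_tail_proof e))
                 (fun e => Ordinal (dstar_head_proof e)).

Definition Vstar (o : comRingType) (m a : nat) : qrep o (dual_star a) :=
  @QRep o (dual_star a) (fun _ => m) (fun _ => 1%:M).

From HB Require Import structures.
From mathcomp Require Import all_boot all_order all_algebra.
From mathcomp Require Import boolp classical_sets reals constructive_ereal ereal esum exp.
From mathcomp Require Import zify functions fsbigop.
Import Order.TTheory GRing.Theory Num.Theory.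
Set Implicit Arguments. Unset Strict Implicit. Unset Printing Implicit Defensive.
Local Open Scope ring_scope.
Local Open Scope classical_set_scope.

(* A finite-index subrepresentation of V*_{m,a} is a finite-index submodule
   L_1 of o^m together with a-1 finite-index submodules of L_1.  Over a discrete
   valuation ring L_1 is free: for each coordinate i pick a vector of L_1 vanishing
   before i whose i-th coordinate has least valuation; these rows form a triangular
   matrix B with L_1 = o^m B.  Right multiplication by B matches the finite-index
   submodules U of o^m with those of L_1, and |o^m : U B| = |o^m : L_1| |o^m : U|.
   Hence |o^m : L_1|^-s occurs a times in each term, and the sum over the
   subrepresentations factors as zeta_{o^m}(as) zeta_{o^m}(s)^(a-1). *)

Section SubmoduleIndex.
Variables (R : comNzRingType) (m : nat).
Implicit Types (U : set 'rV[R]_m) (u v : 'rV[R]_m).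

Lemma submoduleN U u : submodule U -> U u -> U (- u).
Proof. by case=> _ _ UZ Uu; rewrite -scaleN1r; apply: UZ. Qed.

Lemma submoduleB U u v : submodule U -> U u -> U v -> U (u - v).
Proof. by move=> U_sub Uu Uv; case: (U_sub) => _ UD _; apply: UD => //; apply: submoduleN. Qed.

Lemma submodule_sum U (I : Type) (r : seq I) (F : I -> 'rV[R]_m) :
  submodule U -> (forall i, U (F i)) -> U (\sum_(i <- r) F i).
Proof. by case=> U0 UD _ UF; apply: big_ind. Qed.

Lemma has_index_classifier U k : submodule U -> has_index U k ->
  exists (f : 'I_k -> 'rV[R]_m) (c : 'rV[R]_m -> 'I_k),
    cancel f c /\ forall u v, c u = c v <-> U (u - v).
Proof.
move=> U_sub [f [f_inj f_cover]]; have [c Uc] := choice f_cover.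
exists f, c; split=> [i|u v]; first exact/esym/f_inj/Uc.
split=> [cuv|Uuv].
  by have := submoduleB U_sub (Uc u) (Uc v); rewrite cuv opprB addrA addrNK.
apply: f_inj; case: (U_sub) => _ UD _.
have -> : f (c u) - f (c v) = (v - f (c v)) - (u - f (c u)) + (u - v).
  rewrite opprB [v - _]addrC -!addrA [LHS]addrC; congr (_ + _).
  by rewrite addKr addrCA subrr addr0.
by apply: UD => //; apply: submoduleB.
Qed.

Lemma has_index_card U (F : finType) (g : F -> 'rV[R]_m) :
  (forall i j, U (g i - g j) -> i = j) -> (forall v, exists i, U (v - g i)) ->
  has_index U #|F|.
Proof.
move=> g_inj g_cover; exists (fun i => g (enum_val i)); split.
  by move=> i j /g_inj /enum_val_inj.
by move=> v; have [i Uv] := g_cover v; exists (enum_rank i); rewrite enum_rankK.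
Qed.

Lemma has_index_leq U k l : submodule U -> has_index U k -> has_index U l ->
  (k <= l)%N.
Proof.
move=> U_sub /(has_index_classifier U_sub) [f [c [fK c_eq]]].
move=> /(has_index_classifier U_sub) [_ [c' [_ c'_eq]]].
have inj : injective (c' \o f).
  by move=> i j /c'_eq /c_eq; rewrite !fK.
by have := leq_card _ inj; rewrite !card_ord.
Qed.

Lemma lindexE U k : submodule U -> has_index U k -> lindex U = k.
Proof.
move=> U_sub Uk; apply: xget_unique => // l Ul.
by apply/eqP; rewrite eqn_leq !(has_index_leq U_sub).
Qed.

Lemma finite_index_classifier U (F : finType) (c : 'rV[R]_m -> F) :
  (forall u v, c u = c v <-> U (u - v)) -> finite_index U.
Proof.
move=> c_eq; pose F' := {i : F | `[< exists u, c u = i >]}.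
have r_ex (i : F') : exists u, c u = val i by case: i => i /= /asboolP.
have [r rK] := choice r_ex.
exists #|{: F'}|; apply: (has_index_card (g := r)).
  by move=> i j /c_eq; rewrite !rK => /val_inj.
move=> v; have cv : `[< exists u, c u = c v >] by apply/asboolP; exists v.
by exists (exist _ (c v) cv); apply/c_eq; rewrite rK.
Qed.

End SubmoduleIndex.

Definition lattice_basis (R : comNzRingType) m (L : set 'rV[R]_m) (B : 'M[R]_m) :=
  (forall x : 'rV[R]_m, x *m B = 0 -> x = 0) /\
  (forall v, L v <-> exists x, v = x *m B).

Definition zero_before (R : comNzRingType) m (i : nat) (v : 'rV[R]_m) :=
  forall j : 'I_m, (j < i)%N -> v 0 j = 0.

Lemma upper_trig_mulmx_eq0 (R : idomainType) m (B : 'M[R]_m) :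
  (forall i j : 'I_m, (j < i)%N -> B i j = 0) -> (forall i, B i i != 0) ->
  forall x : 'rV[R]_m, x *m B = 0 -> x = 0.
Proof.
move=> B_trig B_diag x xB0.
have detB : \det B != 0.
  rewrite -det_tr det_trig; first by apply/prodf_neq0 => i _; rewrite mxE.
  by apply/forallP => i; apply/forallP => j; apply/implyP => ij; rewrite mxE B_trig.
move/(congr1 (mulmx^~ (\adj B))): xB0.
rewrite -mulmxA mul_mx_adj mul_mx_scalar mul0mx => /eqP.
by rewrite scalemx_eq0 (negbTE detB) => /eqP.
Qed.

Section PivotRows.
Variables (R : comNzRingType) (m : nat) (L : set 'rV[R]_m) (B : 'M[R]_m).
Hypotheses (L_sub : submodule L) (LB : forall i, L (row i B)).
Hypothesis B_trig : forall i j : 'I_m, (j < i)%N -> B i j = 0.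
Hypothesis B_pivot : forall (i : 'I_m) v, L v -> zero_before i v -> dvdr (B i i) (v 0 i).

Lemma pivot_rows_spanP v : L v <-> exists x, v = x *m B.
Proof.
split=> [|[x ->]]; last first.
  by rewrite mulmx_sum_row; apply: submodule_sum => // i; case: L_sub => _ _; apply.
(* Only the last [k] coordinates of [w] may be nonzero; subtracting a multiple of
   row [m - k.+1] of [B] clears one more. *)
suff span k w : L w -> zero_before (m - k) w -> exists x, w = x *m B.
  by move=> Lv; apply: (span m) => // j; rewrite subnn.
elim: k w => [|k IHk] w Lw w0.
  by exists 0; rewrite mul0mx; apply/rowP => j; rewrite mxE w0 ?subn0.
have [mk|km] := leqP m k.
  by apply: IHk => // j; rewrite (_ : m - k = 0)%N //; lia.
have lt_i : (m - k.+1 < m)%N by lia.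
pose i := Ordinal lt_i.
have [c wi] : dvdr (B i i) (w 0 i) by apply: B_pivot.
have [x wB] : exists x, w - c *: row i B = x *m B.
  apply: IHk => [|j ji]; first by apply: submoduleB => //; case: L_sub => _ _; apply.
  rewrite !mxE; case: (ltngtP j i) => [lt_ji|lt_ij|/val_inj->]; last by rewrite wi subrr.
  - by rewrite w0 ?B_trig ?mulr0 ?subr0.
  - by move: ji lt_ij => /=; lia.
exists (x + c *: delta_mx 0 i).
by rewrite mulmxDl -wB -scalemxAl -rowE subrK.
Qed.

End PivotRows.

Section UniformizerLattices.
Variables (o : idomainType) (pi : o).
Hypothesis pi_unif : is_uniformizer pi.

Lemma dvdr_min_exists (S : set o) x : S x -> x != 0 ->
  exists g, [/\ S g, g != 0 & forall y, S y -> dvdr g y].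
Proof.
case: pi_unif => _ _ pi_fact Sx x0.
(* [g] is an element of [S] of least valuation. *)
pose P n := `[< exists y u, [/\ S y, y != 0, u \is a GRing.unit & y = u * pi ^+ n] >].
have exP : exists n, P n.
  by have [u [n [Uu ex]]] := pi_fact x x0; exists n; apply/asboolP; exists x, u.
case: (ex_minnP exP) => n /asboolP [g [u [Sg g0 Uu eg]]] n_min.
exists g; split=> // y Sy.
have [->|y0] := eqVneq y 0; first by exists 0; rewrite mul0r.
have [w [k [Uw ey]]] := pi_fact y y0.
have /n_min le_nk : P k by apply/asboolP; exists y, w.
exists (w * u^-1 * pi ^+ (k - n)); rewrite ey eg -{1}(subnK le_nk) exprD.
by rewrite -!mulrA [pi ^+ _ * (u * _)]mulrCA mulKr ?subnK.
Qed.

Lemma uniformizer_expr_inj : injective (fun n : nat => pi ^+ n).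
Proof.
case: pi_unif => pi0 pi_nunit _.
suff le_inj k l : (k <= l)%N -> pi ^+ k = pi ^+ l -> k = l.
  by move=> k l; case: (leqP k l) => [|/ltnW] /le_inj // + /esym => /[apply].
move=> /subnKC <-; rewrite exprD -{1}[pi ^+ k]mulr1 => /mulfI.
rewrite expf_neq0 // => /(_ isT).
case: (l - k)%N => [|d]; first by rewrite addn0.
rewrite exprS => /esym pi_unit; case/negP: pi_nunit.
by apply/unitrPr; exists (pi ^+ d).
Qed.

Variable m : nat.
Implicit Types (L : set 'rV[o]_m).

Lemma finite_index_axis L (i : 'I_m) : submodule L -> finite_index L ->
  exists2 c, c != 0 & L (c *: delta_mx 0 i).
Proof.
move=> L_sub [k /(has_index_classifier L_sub) [_ [c [_ c_eq]]]].
(* Pigeonhole: two of the vectors [pi ^+ j *: 'e_i], [j <= k], are congruent mod [L]. *)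
pose g (j : 'I_k.+1) := c (pi ^+ j *: delta_mx 0 i).
have [j1 [j2 [gj ne_j]]] : exists j1 j2, g j1 = g j2 /\ j1 <> j2.
  apply: contrapT => g_inj.
  suff /leq_card : injective g by rewrite !card_ord ltnn.
  by move=> j1 j2 gj; apply: contrapT => ne_j; apply: g_inj; exists j1, j2.
exists (pi ^+ j1 - pi ^+ j2); last by rewrite scalerBl; apply/c_eq.
by rewrite subr_eq0; apply/eqP => /uniformizer_expr_inj ej; apply/ne_j/val_inj.
Qed.

Lemma pivot_exists L (i : 'I_m) : submodule L -> finite_index L ->
  exists b, [/\ L b, zero_before i b, b 0 i != 0 &
               forall v, L v -> zero_before i v -> dvdr (b 0 i) (v 0 i)].
Proof.
move=> L_sub L_fin; have [c c0 Lc] := finite_index_axis i L_sub L_fin.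
pose S y := exists2 v, L v /\ zero_before i v & y = v 0 i.
have Sc : S c.
  exists (c *: delta_mx 0 i); last by rewrite !mxE !eqxx mulr1.
  by split=> // j ji; rewrite !mxE eqxx -val_eqE /= ltn_eqF // mulr0.
have [_ [[b [Lb b0] ->] bi0 bi_min]] := dvdr_min_exists Sc c0.
by exists b; split=> // v Lv v0; apply: bi_min; exists v.
Qed.

Lemma lattice_basis_exists L : submodule L -> finite_index L ->
  exists B, lattice_basis L B.
Proof.
move=> L_sub L_fin; have [b bP] := choice (fun i => pivot_exists i L_sub L_fin).
pose B := \matrix_i b i.
have rowB i : row i B = b i by rewrite rowK.
have BE i j : B i j = b i 0 j by rewrite mxE.
exists B; split.
  apply: upper_trig_mulmx_eq0 => [i j ji|i]; rewrite BE; case: (bP i) => // _ b0 _ _.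
  exact: b0.
apply: pivot_rows_spanP => // [i|i j ji|i v]; rewrite ?rowB ?BE.
- by case: (bP i).
- by case: (bP i) => _ b0 _ _; apply: b0.
- by case: (bP i) => _ _ _; apply.
Qed.

End UniformizerLattices.

Section BasisTransport.
Variables (R : comNzRingType) (m : nat) (L : set 'rV[R]_m) (B : 'M[R]_m).
Hypothesis B_basis : lattice_basis L B.
Implicit Types (U V : set 'rV[R]_m).

Lemma basis_mulmxr_inj : injective (fun x : 'rV[R]_m => x *m B).
Proof.
move=> x y xy; apply/eqP; rewrite -subr_eq0; apply/eqP/B_basis.1.
by rewrite mulmxBl xy subrr.
Qed.

Lemma basis_image_inj : injective (fun U => [set x *m B | x in U]).
Proof.
move=> U U' UU'; apply/seteqP; split=> x.
  by rewrite -(image_inj basis_mulmxr_inj) UU' (image_inj basis_mulmxr_inj).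
by rewrite -(image_inj basis_mulmxr_inj) -UU' (image_inj basis_mulmxr_inj).
Qed.

Lemma basis_image_sub U : [set x *m B | x in U] `<=` L.
Proof. by move=> _ [x _ <-]; apply/B_basis.2; exists x. Qed.

Lemma basis_image_preimage V : V `<=` L -> [set x *m B | x in [set x | V (x *m B)]] = V.
Proof.
move=> VL; apply/seteqP; split=> [_ [x Vx <-] //|v Vv].
by have [x vx] := (B_basis.2 v).1 (VL _ Vv); exists x; rewrite /= -vx.
Qed.

Lemma submodule_image U : submodule U -> submodule [set x *m B | x in U].
Proof.
case=> U0 UD UZ; split.
- by exists 0; rewrite ?mul0mx.
- by move=> _ _ [x Ux <-] [y Uy <-]; exists (x + y); rewrite ?mulmxDl //; apply: UD.
- by move=> c _ [x Ux <-]; exists (c *: x); rewrite ?scalemxAl //; apply: UZ.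
Qed.

Lemma submodule_preimage V : submodule V -> submodule [set x | V (x *m B)].
Proof.
case=> V0 VD VZ; split=> /=.
- by rewrite mul0mx.
- by move=> x y Vx Vy; rewrite mulmxDl; apply: VD.
- by move=> c x Vx; rewrite -scalemxAl; apply: VZ.
Qed.

Lemma basis_image_sub_mulmx U u v :
  [set x *m B | x in U] (u *m B - v *m B) <-> U (u - v).
Proof. by rewrite -mulmxBl (image_inj basis_mulmxr_inj). Qed.

Lemma finite_index_basis_image U : submodule U ->
  finite_index [set x *m B | x in U] -> finite_index U.
Proof.
move=> U_sub [k /(has_index_classifier (submodule_image U_sub)) [_ [c [_ c_eq]]]].
apply: (finite_index_classifier (c := fun x => c (x *m B))) => u v.
by rewrite c_eq basis_image_sub_mulmx.
Qed.

Lemma has_index_basis_image U k l : submodule L -> submodule U ->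
  has_index L k -> has_index U l -> has_index [set x *m B | x in U] (k * l).
Proof.
move=> L_sub U_sub [f [f_inj f_cover]] [g [g_inj g_cover]].
have := has_index_card (U := [set x *m B | x in U])
  (g := fun p : 'I_k * 'I_l => f p.1 + g p.2 *m B).
rewrite card_prod !card_ord; apply.
  move=> [i j] [i' j'] /= fg.
  have Lf : L (f i - f i').
    have -> : f i - f i' = (f i + g j *m B - (f i' + g j' *m B)) - (g j *m B - g j' *m B).
      by rewrite opprD addrACA addrK.
    apply: submoduleB => //; first exact: basis_image_sub fg.
    by apply/B_basis.2; exists (g j - g j'); rewrite mulmxBl.
  move: fg; rewrite -(f_inj _ _ Lf) opprD addrACA subrr add0r.
  by move=> /basis_image_sub_mulmx /g_inj ->.
move=> v; have [i Lv] := f_cover v; have [w vw] := (B_basis.2 _).1 Lv.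
have [j Uw] := g_cover w; exists (i, j) => /=.
by rewrite opprD addrA vw; apply/basis_image_sub_mulmx.
Qed.

End BasisTransport.

Section FunCons.
Variables (T : Type) (n : nat).
Implicit Types (x : T) (F : 'I_n -> T).

Definition fcons x F : 'I_n.+1 -> T :=
  fun i => if unlift ord0 i is Some j then F j else x.

Lemma fcons0 x F : fcons x F ord0 = x.
Proof. by rewrite /fcons unlift_none. Qed.

Lemma fconsS x F j : fcons x F (lift ord0 j) = F j.
Proof. by rewrite /fcons liftK. Qed.

Lemma fconsP (P : T -> Prop) x F :
  (forall i, P (fcons x F i)) <-> P x /\ forall j, P (F j).
Proof.
split=> [PxF|[Px PF] i].
  split=> [|j]; first by move: (PxF ord0); rewrite fcons0.
  by move: (PxF (lift ord0 j)); rewrite fconsS.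
by rewrite /fcons; case: unliftP.
Qed.

Lemma fcons_eta (G : 'I_n.+1 -> T) : fcons (G ord0) (fun j => G (lift ord0 j)) = G.
Proof. by apply/funext => i; rewrite /fcons; case: unliftP => [j|] ->. Qed.

Lemma fcons_inj x y F G : fcons x F = fcons y G -> x = y /\ F = G.
Proof.
move=> xFyG; split; first by rewrite -(fcons0 x F) xFyG fcons0.
by apply/funext => j; rewrite -(fconsS x F) xFyG fconsS.
Qed.

End FunCons.

Section ExtendedSums.
Local Open Scope ereal_scope.
Variable R : realType.

Lemma esumZl (T : choiceType) (I : set T) (f : T -> \bar R) (c : \bar R) :
  0 <= c -> (forall i, 0 <= f i) ->
  \esum_(i in I) (c * f i) = c * \esum_(i in I) f i.
Proof.
move=> c0 f0.
have [[i Ii fi0]|f_eq0] := pselect (exists2 i, I i & 0 < f i); last first.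
  have fI0 i : I i -> f i = 0.
    move=> Ii; apply/eqP; rewrite eq_le f0 andbT leNgt.
    by apply/negP => fi0; apply: f_eq0; exists i.
  by rewrite !esum1 ?mule0 // => j /fI0 ->; rewrite mule0.
have fsets_i : fsets I [set i] by split=> // j ->.
case: c c0 => [r|_|//]; last first.
  have esum_gt0 : 0 < \esum_(j in I) f j.
    by apply: (lt_le_trans fi0); apply: esum_ge; exists [set i]; rewrite ?fsbig_set1.
  rewrite gt0_mulye //; apply/eqP; rewrite eq_le leey /=.
  by apply: esum_ge; exists [set i]; rewrite ?fsbig_set1 ?gt0_mulye.
rewrite lee_fin le0r => /orP[/eqP->|r0].
  by rewrite mul0e esum1 // => j _; rewrite mul0e.
rewrite /esum -ereal_sup_pZl //; congr ereal_sup; apply/seteqP; split.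
  by move=> _ [A IA <-]; exists (\sum_(j \in A) f j); [exists A|rewrite ge0_mule_fsumr].
by move=> _ [_ [A IA <-] <-]; exists A; rewrite ?ge0_mule_fsumr.
Qed.

Lemma esumZr (T : choiceType) (I : set T) (f : T -> \bar R) (c : \bar R) :
  0 <= c -> (forall i, 0 <= f i) ->
  \esum_(i in I) (f i * c) = (\esum_(i in I) f i) * c.
Proof.
by move=> c0 f0; rewrite muleC -esumZl //; apply: eq_esum => i _; rewrite muleC.
Qed.

Lemma esum_mul (T1 T2 : choiceType) (A : set T1) (B : set T2)
    (f : T1 -> \bar R) (g : T2 -> \bar R) :
  (forall i, 0 <= f i) -> (forall j, 0 <= g j) ->
  \esum_(k in A `*` B) (f k.1 * g k.2) = (\esum_(i in A) f i) * \esum_(j in B) g j.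
Proof.
move=> f0 g0; transitivity (\esum_(i in A) \esum_(j in B) (f i * g j)).
  by rewrite esum_esum // => i j _ _; rewrite mule_ge0.
by rewrite -esumZr ?esum_ge0 //; apply: eq_esum => i _; apply: esumZl.
Qed.

Lemma esum_bigprod (T : choiceType) n (A : set T) (h : T -> \bar R) :
  (forall t, 0 <= h t) ->
  \esum_(F in [set F : {classic 'I_n -> T} | forall j, A (F j)])
    \prod_(j < n) h (F j) = \prod_(j < n) \esum_(t in A) h t.
Proof.
move=> h0; elim: n => [|n IHn].
  have F0 : 'I_0 -> T by case.
  rewrite big_ord0 (_ : [set F | _] = [set F0]); first by rewrite esum_set1 big_ord0.
  by apply/seteqP; split=> F _ /=; [apply/funext|]; case.
have fcons_bij : set_bij (A `*` [set F : {classic 'I_n -> T} | forall j, A (F j)])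
    [set G : {classic 'I_n.+1 -> T} | forall i, A (G i)]
    (fun p => fcons p.1 p.2).
  split.
  - by move=> [t F] /= AtF; apply/fconsP.
  - by move=> [t F] [t' F'] _ _ /= tF; have [-> ->] := fcons_inj tF.
  - move=> G /= AG; exists (G ord0, fun j => G (lift ord0 j)); last exact: fcons_eta.
    by split=> /=.
rewrite (@reindex_esum _ _ _ _ _ _ _ fcons_bij) big_ord_recl -IHn -esum_mul //; last first.
  by move=> F; apply: prode_ge0.
apply: eq_esum => -[t F] _ /=; rewrite big_ord_recl fcons0.
by congr (_ * _); apply: eq_bigr => j _; rewrite fconsS.
Qed.

End ExtendedSums.

Definition fi_submodules (R : comNzRingType) m : set {classic set 'rV[R]_m} :=
  [set U | submodule U /\ finite_index U].

Definition lattice_basis_of (R : comNzRingType) m (L : set 'rV[R]_m) : 'M[R]_m :=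
  xget 1%:M (lattice_basis L).

Lemma lattice_basis_ofP (o : idomainType) (pi : o) m (L : set 'rV[o]_m) :
  is_uniformizer pi -> fi_submodules L -> lattice_basis L (lattice_basis_of L).
Proof.
by move=> pi_unif [L_sub L_fin]; apply: xgetPex; apply: (lattice_basis_exists pi_unif).
Qed.

Lemma subrep_VstarP (R : comNzRingType) m n (L : 'I_n.+1 -> set 'rV[R]_m) :
  subrep (V := Vstar R m n.+1) L <->
  (forall i, submodule (L i)) /\ forall j, L (lift ord0 j) `<=` L ord0.
Proof.
have tailE (j : 'I_n) : Ordinal (@dstar_tail_proof n.+1 j) = lift ord0 j by apply: val_inj.
have headE (j : 'I_n) : Ordinal (@dstar_head_proof n.+1 j) = ord0 by apply: val_inj.
split=> -[L_sub L_arr]; split=> // j v.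
  by move: (L_arr j v); rewrite /= tailE headE mulmx1.
by rewrite /= tailE headE mulmx1; apply: L_arr.
Qed.

Section DualStarSubreps.
Variables (o : idomainType) (pi : o) (m n : nat).
Hypothesis pi_unif : is_uniformizer pi.
Local Notation lattices := (@fi_submodules o m).
Local Notation basis_image L U := [set x *m lattice_basis_of L | x in U].

Definition star_glue (p : {classic set 'rV[o]_m} * {classic 'I_n -> set 'rV[o]_m}) :
    {classic 'I_n.+1 -> set 'rV[o]_m} :=
  fcons p.1 (fun j => basis_image p.1 (p.2 j)).

Definition star_pairs := lattices `*` [set F : {classic 'I_n -> _} | forall j, lattices (F j)].

Definition star_subreps := [set L : {classic 'I_n.+1 -> set 'rV[o]_m} |
  subrep (V := Vstar o m n.+1) L /\ forall i, finite_index (L i)].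

Lemma has_index_lattice_image L U k l : lattices L -> lattices U ->
  has_index L k -> has_index U l -> has_index (basis_image L U) (k * l).
Proof.
move=> L_lat [U_sub _].
by apply: (has_index_basis_image (lattice_basis_ofP pi_unif L_lat)) => //; case: L_lat.
Qed.

Lemma lindex_lattice_image L U : lattices L -> lattices U ->
  lindex (basis_image L U) = (lindex L * lindex U)%N.
Proof.
move=> L_lat U_lat; have [[L_sub [k Lk]] [U_sub [l Ul]]] := (L_lat, U_lat).
rewrite (lindexE L_sub Lk) (lindexE U_sub Ul); apply: lindexE.
  exact/submodule_image.
exact: has_index_lattice_image.
Qed.

Lemma star_glue_subrep p : star_pairs p -> star_subreps (star_glue p).
Proof.
case: p => [L F] [/= L_lat F_lat]; have L_basis := lattice_basis_ofP pi_unif L_lat.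
split.
  apply/subrep_VstarP; split=> [|j]; first apply/fconsP.
    by split=> [|j]; [case: L_lat|apply/submodule_image; case: (F_lat j)].
  by rewrite /star_glue /= fcons0 fconsS; apply: basis_image_sub L_basis _.
apply/fconsP; split=> [|j]; first by case: L_lat.
case: (L_lat) => _ [k Lk]; case: (F_lat j) => _ [l Fl].
by exists (k * l)%N; apply: has_index_lattice_image.
Qed.

Lemma star_glue_surj : set_surj star_pairs star_subreps star_glue.
Proof.
move=> L [/subrep_VstarP [L_sub L_arr] L_fin].
have L_lat : lattices (L ord0) by split.
have L_basis := lattice_basis_ofP pi_unif L_lat.
pose U j := [set x | L (lift ord0 j) (x *m lattice_basis_of (L ord0))].
have UE j : basis_image (L ord0) (U j) = L (lift ord0 j).
  by apply: (basis_image_preimage L_basis); apply: L_arr.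
have U_sub j : submodule (U j) by apply/submodule_preimage/L_sub.
exists (L ord0, U); last by rewrite /star_glue /=; under eq_fun do rewrite UE; apply: fcons_eta.
split=> // j; split=> //.
by apply: finite_index_basis_image L_basis _ (U_sub j) _; rewrite UE.
Qed.

Lemma star_glue_bij : set_bij star_pairs star_subreps star_glue.
Proof.
split=> [p /star_glue_subrep //||]; last exact: star_glue_surj.
move=> [L F] [L' F'] /set_mem [/= L_lat _] _ /= glue_eq.
have [/= eL eF] := fcons_inj glue_eq; subst L'.
congr (_, _); apply/funext => j; move/(congr1 (@^~ j)): eF => /= eFj.
exact: basis_image_inj (lattice_basis_ofP pi_unif L_lat) _ _ eFj.
Qed.

Lemma star_glue_weight (Rr : realType) (s : Rr) p : star_pairs p ->
  \prod_(i < n.+1) (lindex (star_glue p i))%:R `^ (- s) =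
  (lindex p.1)%:R `^ (- (n.+1%:R * s)) * \prod_(j < n) (lindex (p.2 j))%:R `^ (- s).
Proof.
case: p => [L F] [/= L_lat F_lat].
rewrite big_ord_recl /star_glue fcons0 /=.
under eq_bigr do rewrite fconsS lindex_lattice_image // natrM powRM //.
rewrite big_split /= prodr_const card_ord mulrA -exprS.
rewrite -powR_mulrn ?powR_ge0 //.
by rewrite -powRrM mulNr [(s * _)]mulrC.
Qed.

End DualStarSubreps.

Theorem proposition3p9 (Rr : realType) (o : idomainType) (m a : nat) (s : Rr) :
  compact_DVR o -> (0 < a)%N ->
  zeta_rep (Vstar o m a) s =
  (zeta_free o m (a%:R * s) * \prod_(j < a.-1) zeta_free o m s)%E.
Proof.
move=> [pi [pi_unif _]]; case: a => [//|n] _ /=.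
rewrite /zeta_rep (@reindex_esum _ _ _ _ _ _ _ (star_glue_bij m n pi_unif)).
rewrite /zeta_free -esum_bigprod => [|U]; last by rewrite lee_fin powR_ge0.
rewrite -esum_mul => [|L|F]; last 2 first.
- by rewrite lee_fin powR_ge0.
- by apply: prode_ge0 => j _; rewrite lee_fin powR_ge0.
apply: eq_esum => p pP /=.
by rewrite (star_glue_weight pi_unif s pP) EFinM -prodEFin.
Qed.
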